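(* Let $\lambda\subset\mathbb{H}$ be a (complex) Lagrangian subspace such that $h(v,v)\ge 0$ for every $v\in\lambda$. Then $\lambda$ is transverse to $H_1=H\oplus 0$, i.e. $\lambda\cap H_1=\{0\}$ and $\lambda+H_1=\mathbb{H}$.
   Context: $H$ is a complex (separable) Hilbert space with inner product $\langle\cdot,\cdot\rangle$ (antilinear in the second variable), $\tau$ is an isometric antilinear involution of $H$, and $(\xi,\eta)=\langle \xi,\tau\eta\rangle$ is the associated symmetric bilinear form. $\mathbb{H}=H\oplus H=\{\eta\oplus\xi\}$ with Hilbert inner product $\langle \eta\oplus\xi,\eta'\oplus\xi'\rangle=\langle\eta,\eta'\rangle+\langle\xi,\xi'\rangle$ and complex symplectic form $\omega(\eta\oplus\xi,\eta'\oplus\xi')=(\eta,\xi')-(\xi,\eta')$. For a subspace $F$, $F^{\circ}$ denotes its $\omega$-orthogonal; a Lagrangian is a subspace $\lambda$ with $\lambda^\circ=\lambda$. $H_1=H\oplus 0$, $H_2=0\oplus H$. The Hermitian form $h$ on $\mathbb{H}$ is $h(\eta\oplus\xi,\eta'\oplus\xi')=\langle\xi,\xi'\rangle-\langle\eta,\eta'\rangle$. *)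

From Stdlib Require Import Reals.
Open Scope R_scope.

Record C := mkC { re : R; im : R }.
Definition C0 : C := mkC 0 0.
Definition C1 : C := mkC 1 0.
Definition Cadd (a b : C) : C := mkC (re a + re b) (im a + im b).
Definition Copp (a : C) : C := mkC (- re a) (- im a).
Definition Csub (a b : C) : C := Cadd a (Copp b).
Definition Cmul (a b : C) : C :=
  mkC (re a * re b - im a * im b) (re a * im b + im a * re b).
Definition Cconj (a : C) : C := mkC (re a) (- im a).

(* inner product linear in the first variable, antilinear in the second *)
Record HilbertSpace := {
  vec :> Type;
  vadd : vec -> vec -> vec;
  vzero : vec;
  vopp : vec -> vec;
  smul : C -> vec -> vec;
  inner : vec -> vec -> C;
  vadd_assoc : forall x y z, vadd x (vadd y z) = vadd (vadd x y) z;
  vadd_comm : forall x y, vadd x y = vadd y x;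
  vadd_0l : forall x, vadd vzero x = x;
  vadd_oppl : forall x, vadd (vopp x) x = vzero;
  smul_addr : forall c x y, smul c (vadd x y) = vadd (smul c x) (smul c y);
  smul_addl : forall c d x, smul (Cadd c d) x = vadd (smul c x) (smul d x);
  smul_mul : forall c d x, smul (Cmul c d) x = smul c (smul d x);
  smul_1 : forall x, smul C1 x = x;
  inner_addl : forall x y z, inner (vadd x y) z = Cadd (inner x z) (inner y z);
  inner_smull : forall c x y, inner (smul c x) y = Cmul c (inner x y);
  inner_conj : forall x y, inner y x = Cconj (inner x y);
  inner_pos : forall x, 0 <= re (inner x x);
  inner_def : forall x, inner x x = C0 -> x = vzero;
  complete : forall u : nat -> vec,
    (forall eps, 0 < eps -> exists N, forall m n, (N <= m)%nat -> (N <= n)%nat ->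
       sqrt (re (inner (vadd (u m) (vopp (u n))) (vadd (u m) (vopp (u n))))) < eps) ->
    exists x, forall eps, 0 < eps -> exists N, forall n, (N <= n)%nat ->
       sqrt (re (inner (vadd (u n) (vopp x)) (vadd (u n) (vopp x)))) < eps
}.

Arguments vadd {h}. Arguments vzero {h}. Arguments vopp {h}.
Arguments smul {h}. Arguments inner {h}.

Definition vnorm {H : HilbertSpace} (x : H) : R := sqrt (re (inner x x)).
Definition vsub {H : HilbertSpace} (x y : H) : H := vadd x (vopp y).

Definition separable (H : HilbertSpace) : Prop :=
  exists e : nat -> H, forall (x : H) eps, 0 < eps ->
    exists n, vnorm (vsub x (e n)) < eps.

Definition isometric_antilinear_involution {H : HilbertSpace} (tau : H -> H) : Prop :=
  (forall x y, tau (vadd x y) = vadd (tau x) (tau y)) /\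
  (forall c x, tau (smul c x) = smul (Cconj c) (tau x)) /\
  (forall x, tau (tau x) = x) /\
  (forall x, vnorm (tau x) = vnorm x).

(* symmetric bilinear form (xi, eta) = <xi, tau eta> *)
Definition bil {H : HilbertSpace} (tau : H -> H) (x y : H) : C := inner x (tau y).

(* the doubled space HH = H (+) H, elements (eta, xi) *)
Definition HH (H : HilbertSpace) : Type := (H * H)%type.
Definition HHadd {H : HilbertSpace} (v w : HH H) : HH H :=
  (vadd (fst v) (fst w), vadd (snd v) (snd w)).
Definition HHzero {H : HilbertSpace} : HH H := (vzero, vzero).
Definition HHsmul {H : HilbertSpace} (c : C) (v : HH H) : HH H :=
  (smul c (fst v), smul c (snd v)).

Definition omega {H : HilbertSpace} (tau : H -> H) (v w : HH H) : C :=
  Csub (bil tau (fst v) (snd w)) (bil tau (snd v) (fst w)).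

Definition hform {H : HilbertSpace} (v w : HH H) : C :=
  Csub (inner (snd v) (snd w)) (inner (fst v) (fst w)).

Definition is_subspace {H : HilbertSpace} (F : HH H -> Prop) : Prop :=
  F HHzero /\ (forall v w, F v -> F w -> F (HHadd v w)) /\
  (forall c v, F v -> F (HHsmul c v)).

Definition omega_orth {H : HilbertSpace} (tau : H -> H) (F : HH H -> Prop) : HH H -> Prop :=
  fun w => forall v, F v -> omega tau v w = C0.

Definition lagrangian {H : HilbertSpace} (tau : H -> H) (L : HH H -> Prop) : Prop :=
  is_subspace L /\ (forall w, omega_orth tau L w <-> L w).

Definition H1 {H : HilbertSpace} : HH H -> Prop := fun v => snd v = vzero.

Definition transverse {H : HilbertSpace} (L M : HH H -> Prop) : Prop :=
  (forall v, L v -> M v -> v = HHzero) /\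
  (forall p : HH H, exists l m, L l /\ M m /\ p = HHadd l m).

(* Intersection: a vector (eta, 0) of L has h = -||eta||^2 >= 0, so eta = 0.
   Sum: it suffices that the projection S = snd(L) of L onto the second factor
   is all of H.  We show
   (1) S is a complete subspace of H: on L positivity gives ||eta|| <= ||xi||,
       so a Cauchy sequence in S lifts to a Cauchy sequence in L, whose limit
       stays in L because an omega-orthogonal (here L = L°) is closed;
   (2) S has trivial orthogonal complement: if x is orthogonal to S then
       (tau x, 0) is omega-orthogonal to L, hence lies in L = L°, hence is 0;
   (3) the projection theorem onto a complete subspace (proved here from the
       Hilbert space axioms: a minimizing sequence for the distance is Cauchy
       by the parallelogram law, and its limit is a minimizer, which is
       characterised by orthogonality) then gives S = H. *)
From Pilot Require Import Defs.
From Stdlib Require Import Reals Lra Lia Psatz ClassicalEpsilon Classical.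
(* Re-import so that the complex numbers C of Defs shadow the binomial C of Reals. *)
From Pilot Require Import Defs.
Open Scope R_scope.

Arguments vadd_assoc {h}.
Arguments vadd_comm {h}.
Arguments vadd_0l {h}.
Arguments vadd_oppl {h}.
Arguments smul_addl {h}.
Arguments smul_1 {h}.
Arguments inner_addl {h}.
Arguments inner_smull {h}.
Arguments inner_conj {h}.
Arguments inner_pos {h}.
Arguments inner_def {h}.

Ltac csimpl := unfold Csub, Cadd, Copp, Cmul, Cconj, C0, C1 in *; simpl in *.

Lemma Ceq (a b : C) : re a = re b -> im a = im b -> a = b.
Proof. destruct a, b; simpl; intros; subst; reflexivity. Qed.

Section VectorAlgebra.
Context {H : HilbertSpace}.

Lemma vadd_0r (x : H) : vadd x vzero = x.
Proof. rewrite vadd_comm; apply vadd_0l. Qed.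

Lemma vadd_oppr (x : H) : vadd x (vopp x) = vzero.
Proof. rewrite vadd_comm; apply vadd_oppl. Qed.

Lemma vadd_cancel_l (x y z : H) : vadd x y = vadd x z -> y = z.
Proof.
  intro E.
  rewrite <- (vadd_0l y), <- (vadd_0l z), <- (vadd_oppl x), <- !vadd_assoc, E.
  reflexivity.
Qed.

Lemma smul_C0 (x : H) : smul C0 x = vzero.
Proof.
  apply (vadd_cancel_l (smul C0 x)). rewrite <- smul_addl, vadd_0r.
  f_equal. apply Ceq; csimpl; ring.
Qed.

Lemma smul_m1 (x : H) : smul (mkC (-1) 0) x = vopp x.
Proof.
  apply (vadd_cancel_l x). rewrite vadd_oppr.
  rewrite <- (smul_1 x) at 1. rewrite <- smul_addl.
  replace (Cadd C1 (mkC (-1) 0)) with C0 by (apply Ceq; csimpl; ring).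
  apply smul_C0.
Qed.

Lemma vsub_eq0 (x y : H) : vsub x y = vzero -> x = y.
Proof.
  unfold vsub; intro E.
  rewrite <- (vadd_0r x), <- (vadd_oppl y), vadd_assoc, E, vadd_0l. reflexivity.
Qed.

Lemma vsub_add (x y : H) : vadd (vsub x y) y = x.
Proof. unfold vsub. rewrite <- vadd_assoc, vadd_oppl, vadd_0r. reflexivity. Qed.

Lemma vsub_chain (x y z : H) : vsub x z = vadd (vsub x y) (vsub y z).
Proof.
  unfold vsub. rewrite <- vadd_assoc, (vadd_assoc (vopp y)), vadd_oppl, vadd_0l.
  reflexivity.
Qed.

Lemma inner_addr (x y z : H) : inner x (vadd y z) = Cadd (inner x y) (inner x z).
Proof.
  rewrite (inner_conj (vadd y z) x), inner_addl, (inner_conj y x), (inner_conj z x).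
  apply Ceq; csimpl; ring.
Qed.

Lemma inner_smulr c (x y : H) : inner x (smul c y) = Cmul (Cconj c) (inner x y).
Proof.
  rewrite (inner_conj (smul c y) x), inner_smull, (inner_conj y x).
  apply Ceq; csimpl; ring.
Qed.

Lemma inner_oppl (x y : H) : inner (vopp x) y = Copp (inner x y).
Proof. rewrite <- smul_m1, inner_smull. apply Ceq; csimpl; ring. Qed.

Lemma inner_oppr (x y : H) : inner x (vopp y) = Copp (inner x y).
Proof. rewrite <- smul_m1, inner_smulr. apply Ceq; csimpl; ring. Qed.

Lemma inner_0l (y : H) : inner vzero y = C0.
Proof. rewrite <- (smul_C0 y), inner_smull. apply Ceq; csimpl; ring. Qed.

Lemma inner_0r (y : H) : inner y vzero = C0.
Proof. rewrite <- (smul_C0 y), inner_smulr. apply Ceq; csimpl; ring. Qed.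

Lemma im_inner_self (x : H) : im (inner x x) = 0.
Proof. pose proof (f_equal im (inner_conj x x)) as e. csimpl. lra. Qed.

Lemma re_inner_sym (x y : H) : re (inner y x) = re (inner x y).
Proof. rewrite inner_conj. reflexivity. Qed.

Lemma im_inner_sym (x y : H) : im (inner y x) = - im (inner x y).
Proof. rewrite inner_conj. reflexivity. Qed.

End VectorAlgebra.

Ltac expand := unfold vsub in *;
  repeat progress rewrite ?inner_addl, ?inner_addr, ?inner_smull, ?inner_smulr,
    ?inner_oppl, ?inner_oppr; csimpl.
Ltac expand_in h := unfold vsub in *;
  repeat progress rewrite ?inner_addl, ?inner_addr, ?inner_smull, ?inner_smulr,
    ?inner_oppl, ?inner_oppr in h; csimpl.

Definition sqnorm {H : HilbertSpace} (x : H) : R := re (inner x x).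

Section Norms.
Context {H : HilbertSpace}.

Lemma sqnorm_ge0 (x : H) : 0 <= sqnorm x.
Proof. apply inner_pos. Qed.

Lemma sqnorm_eq0 (x : H) : sqnorm x = 0 -> x = vzero.
Proof. intro E. apply inner_def. apply Ceq; csimpl; [exact E | apply im_inner_self]. Qed.

Lemma vnorm_ge0 (x : H) : 0 <= vnorm x.
Proof. apply sqrt_pos. Qed.

Lemma vnorm_sq (x : H) : vnorm x * vnorm x = sqnorm x.
Proof. apply sqrt_sqrt, sqnorm_ge0. Qed.

Lemma vnorm_lt (x : H) eps : 0 < eps -> sqnorm x < eps * eps -> vnorm x < eps.
Proof.
  intros he hx. rewrite <- (sqrt_square eps) by lra.
  apply sqrt_lt_1_alt. split; [apply sqnorm_ge0 | exact hx].
Qed.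

Lemma vnorm_sub_sym (x y : H) : vnorm (vsub x y) = vnorm (vsub y x).
Proof. unfold vnorm. f_equal. expand. ring. Qed.

Lemma quad_disc (a r q : R) :
  0 <= q -> (forall t, 0 <= a + 2 * t * r + t * t * q) -> r * r <= a * q.
Proof.
  intros hq Ht. destruct (Req_dec q 0) as [q0 | q0].
  - subst q. destruct (Req_dec r 0) as [r0 | r0]; [subst; lra |].
    specialize (Ht (- (a + 1) / (2 * r))). exfalso.
    assert (E : 2 * (- (a + 1) / (2 * r)) * r = - (a + 1)) by (field; auto). nra.
  - specialize (Ht (- r / q)).
    assert (E : (- r / q) * q = - r) by (field; auto).
    set (t := - r / q) in *. nra.
Qed.

Lemma cauchy_schwarz_re (x y : H) :
  re (inner x y) * re (inner x y) <= sqnorm x * sqnorm y.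
Proof.
  apply quad_disc; [apply sqnorm_ge0 |]. intro t.
  pose proof (inner_pos (vadd x (smul (mkC t 0) y))) as P. expand_in P.
  pose proof (re_inner_sym x y). pose proof (im_inner_sym x y).
  pose proof (im_inner_self y). unfold sqnorm. nra.
Qed.

Lemma cauchy_schwarz_im (x y : H) :
  im (inner x y) * im (inner x y) <= sqnorm x * sqnorm y.
Proof.
  pose proof (cauchy_schwarz_re x (smul (mkC 0 1) y)) as P.
  unfold sqnorm in *. expand_in P. pose proof (im_inner_self y). nra.
Qed.

Lemma inner_parts_bound (x y : H) :
  Rabs (re (inner x y)) <= vnorm x * vnorm y /\
  Rabs (im (inner x y)) <= vnorm x * vnorm y.
Proof.
  unfold vnorm. rewrite <- sqrt_mult by apply sqnorm_ge0.
  rewrite <- !sqrt_Rsqr_abs. unfold Rsqr.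
  split; apply sqrt_le_1_alt; [apply cauchy_schwarz_re | apply cauchy_schwarz_im].
Qed.

Lemma vnorm_triangle (x y : H) : vnorm (vadd x y) <= vnorm x + vnorm y.
Proof.
  assert (Hsq : sqnorm (vadd x y) <= (vnorm x + vnorm y) * (vnorm x + vnorm y)).
  { destruct (inner_parts_bound x y) as [Hre _].
    pose proof (Rle_abs (re (inner x y))). pose proof (re_inner_sym x y).
    pose proof (vnorm_sq x). pose proof (vnorm_sq y).
    unfold sqnorm in *. expand. nra. }
  unfold vnorm at 1. rewrite <- (sqrt_square (vnorm x + vnorm y)).
  - apply sqrt_le_1_alt, Hsq.
  - pose proof (vnorm_ge0 x). pose proof (vnorm_ge0 y). lra.
Qed.

End Norms.

Definition converges {H : HilbertSpace} (u : nat -> H) (x : H) : Prop :=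
  forall eps, 0 < eps -> exists N, forall n, (N <= n)%nat -> vnorm (vsub (u n) x) < eps.

Definition cauchy {H : HilbertSpace} (u : nat -> H) : Prop :=
  forall eps, 0 < eps -> exists N, forall m n, (N <= m)%nat -> (N <= n)%nat ->
    vnorm (vsub (u m) (u n)) < eps.

Lemma cauchy_converges {H : HilbertSpace} (u : nat -> H) :
  cauchy u -> exists x, converges u x.
Proof. apply complete. Qed.

Lemma cauchy_dominated {H H' : HilbertSpace} (u : nat -> H) (w : nat -> H') :
  (forall m n, vnorm (vsub (w m) (w n)) <= vnorm (vsub (u m) (u n))) ->
  cauchy u -> cauchy w.
Proof.
  intros Hdom Hu eps he. destruct (Hu eps he) as [N HN].
  exists N. intros m n hm hn. specialize (HN m n hm hn). specialize (Hdom m n). lra.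
Qed.

Lemma inv_succ_small (eps : R) :
  0 < eps -> exists N : nat, forall n, (N <= n)%nat -> / (INR n + 1) < eps.
Proof.
  intro he. destruct (archimed_cor1 eps he) as [N [h1 h2]]. exists N. intros n hn.
  apply Rle_lt_trans with (/ INR N); auto.
  apply Rinv_le_contravar; [apply lt_0_INR; auto |].
  apply le_INR in hn. lra.
Qed.

Lemma inv_succ_pos (n : nat) : 0 < / (INR n + 1).
Proof. pose proof (pos_INR n). apply Rinv_0_lt_compat; lra. Qed.

Lemma seq_choice {T : Type} (P : nat -> T -> Prop) :
  (forall n, exists x, P n x) -> exists u : nat -> T, forall n, P n (u n).
Proof.
  intro Hex. exists (fun n => proj1_sig (constructive_indefinite_description _ (Hex n))).
  intro n. exact (proj2_sig (constructive_indefinite_description _ (Hex n))).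
Qed.

Lemma nonneg_infimum {T : Type} (P : T -> Prop) (f : T -> R) (t0 : T) :
  P t0 -> (forall t, P t -> 0 <= f t) ->
  exists d, 0 <= d /\ (forall t, P t -> d <= f t) /\
            (forall eps, 0 < eps -> exists t, P t /\ f t < d + eps).
Proof.
  intros Pt0 Hf.
  set (E := fun r => exists t, P t /\ r = - f t).
  destruct (completeness E) as [m [Hub Hlub]].
  - exists 0. intros r [t [Pt ->]]. specialize (Hf t Pt). lra.
  - exists (- f t0), t0. auto.
  - assert (Hm0 : m <= 0).
    { apply Hlub. intros r [t [Pt ->]]. specialize (Hf t Pt). lra. }
    exists (- m). split; [lra | split].
    + intros t Pt. assert (Et : E (- f t)) by (exists t; auto).
      specialize (Hub _ Et). lra.
    + intros eps he. apply NNPP; intro Hno.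
      assert (Hub' : is_upper_bound E (m - eps)).
      { intros r [t [Pt ->]]. apply Rnot_lt_le. intro hlt.
        apply Hno. exists t. split; auto. lra. }
      specialize (Hlub _ Hub'). lra.
Qed.

Definition is_hsubspace {H : HilbertSpace} (S : H -> Prop) : Prop :=
  S vzero /\ (forall x y, S x -> S y -> S (vadd x y)) /\
  (forall c x, S x -> S (smul c x)).

Definition complete_subset {H : HilbertSpace} (S : H -> Prop) : Prop :=
  forall u, (forall n, S (u n)) -> cauchy u -> exists x, S x /\ converges u x.

Section Projection.
Context {H : HilbertSpace} (S : H -> Prop).
Hypothesis HS : is_hsubspace S.
Variable b : H.

(* Parallelogram law applied to the midpoint (a + c)/2 of S: if d bounds the
   squared distance from b to S from below, then points of S nearly realising
   d are close to each other. *)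
Lemma near_minimizers_close (d : R) (a c : H) :
  (forall s, S s -> d <= sqnorm (vsub s b)) -> S a -> S c ->
  sqnorm (vsub a c) <= 2 * (sqnorm (vsub a b) - d) + 2 * (sqnorm (vsub c b) - d).
Proof.
  destruct HS as [_ [Sadd Ssmul]]. intros Hd Sa Sc.
  pose proof (Hd _ (Ssmul (mkC (/ 2) 0) _ (Sadd _ _ Sa Sc))) as Hmid.
  unfold sqnorm in *. expand_in Hmid. expand. lra.
Qed.

Lemma minimizing_cauchy (d : R) (u : nat -> H) :
  (forall s, S s -> d <= sqnorm (vsub s b)) ->
  (forall n, S (u n) /\ sqnorm (vsub (u n) b) < d + / (INR n + 1)) ->
  cauchy u.
Proof.
  intros Hd Hu eps he. destruct (inv_succ_small (eps * eps / 4)) as [N HN]; [nra |].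
  exists N. intros m n hm hn. apply vnorm_lt; auto.
  destruct (Hu m) as [Sm Um], (Hu n) as [Sn Un].
  pose proof (near_minimizers_close d _ _ Hd Sm Sn).
  specialize (HN m hm) as Hm. specialize (HN n hn). lra.
Qed.

Lemma minimizing_limit (d : R) (u : nat -> H) (x : H) :
  0 <= d -> (forall n, sqnorm (vsub (u n) b) < d + / (INR n + 1)) ->
  converges u x -> sqnorm (vsub x b) <= d.
Proof.
  intros d0 Hu Hx. rewrite <- vnorm_sq.
  assert (Hle : vnorm (vsub x b) <= sqrt d).
  { apply Rle_plus_epsilon. intros eps he.
    destruct (Hx (eps / 2)) as [N1 HN1]; [lra |].
    destruct (inv_succ_small (eps * eps / 4)) as [N2 HN2]; [nra |].
    set (n := (N1 + N2)%nat).
    specialize (HN1 n ltac:(unfold n; lia)). specialize (HN2 n ltac:(unfold n; lia)).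
    assert (Hun : vnorm (vsub (u n) b) <= sqrt d + eps / 2).
    { unfold vnorm. rewrite <- (sqrt_square (sqrt d + eps / 2))
        by (pose proof (sqrt_pos d); lra).
      apply sqrt_le_1_alt. specialize (Hu n). pose proof (sqrt_pos d).
      pose proof (sqrt_sqrt d d0). fold (sqnorm (vsub (u n) b)). nra. }
    rewrite (vsub_chain x (u n) b).
    pose proof (vnorm_triangle (vsub x (u n)) (vsub (u n) b)) as Htri.
    rewrite vnorm_sub_sym in Htri. lra. }
  pose proof (vnorm_ge0 (vsub x b)). pose proof (sqrt_sqrt d d0). nra.
Qed.

(* A point of S minimising the distance to b is its orthogonal projection:
   for every s in S, t |-> ||m + c t s - b||^2 (c = 1, -i) is minimal at t = 0. *)
Lemma minimizer_orthogonal (m : H) :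
  S m -> (forall s, S s -> sqnorm (vsub m b) <= sqnorm (vsub s b)) ->
  forall s, S s -> inner s (vsub b m) = C0.
Proof.
  destruct HS as [_ [Sadd Ssmul]]. intros Sm Hmin s Ss.
  assert (Hre : re (inner s (vsub m b)) * re (inner s (vsub m b)) <= 0 * sqnorm s).
  { apply quad_disc; [apply sqnorm_ge0 |]. intro t.
    pose proof (Hmin _ (Sadd _ _ Sm (Ssmul (mkC t 0) _ Ss))) as P.
    unfold sqnorm in *. expand_in P. expand.
    pose proof (re_inner_sym m s). pose proof (re_inner_sym b s).
    pose proof (im_inner_self s). nra. }
  assert (Him : im (inner s (vsub m b)) * im (inner s (vsub m b)) <= 0 * sqnorm s).
  { apply quad_disc; [apply sqnorm_ge0 |]. intro t.
    pose proof (Hmin _ (Sadd _ _ Sm (Ssmul (mkC 0 (- t)) _ Ss))) as P.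
    unfold sqnorm in *. expand_in P. expand.
    pose proof (im_inner_sym m s). pose proof (im_inner_sym b s).
    pose proof (im_inner_self s). nra. }
  expand_in Hre. expand_in Him. apply Ceq; expand; nra.
Qed.

Theorem orthogonal_projection :
  complete_subset S -> exists m, S m /\ forall s, S s -> inner s (vsub b m) = C0.
Proof.
  intro Scomplete. pose proof HS as [S0 _].
  destruct (nonneg_infimum S (fun s => sqnorm (vsub s b)) vzero S0
              (fun s _ => sqnorm_ge0 _)) as [d [d0 [Hd Happrox]]].
  destruct (seq_choice (fun n s => S s /\ sqnorm (vsub s b) < d + / (INR n + 1)))
    as [u Hu].
  { intro n. apply Happrox, inv_succ_pos. }
  destruct (Scomplete u (fun n => proj1 (Hu n)) (minimizing_cauchy d u Hd Hu))
    as [m [Sm Hm]].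
  pose proof (minimizing_limit d u m d0 (fun n => proj2 (Hu n)) Hm) as Hdist.
  exists m. split; auto.
  apply minimizer_orthogonal; auto.
  intros s Ss. specialize (Hd s Ss). lra.
Qed.

End Projection.

Lemma real_eq0_of_small (r K : R) :
  0 <= K -> (forall eps, 0 < eps -> Rabs r <= K * eps) -> r = 0.
Proof.
  intros hK Hsmall. apply NNPP; intro hr.
  assert (ha : 0 < Rabs r) by (apply Rabs_pos_lt; exact hr).
  specialize (Hsmall (Rabs r / (K + 1)) ltac:(apply Rdiv_lt_0_compat; lra)).
  assert (K * (Rabs r / (K + 1)) < Rabs r).
  { apply Rmult_lt_reg_r with (K + 1); [lra |].
    replace (K * (Rabs r / (K + 1)) * (K + 1)) with (K * Rabs r) by (field; lra). nra. }
  lra.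
Qed.

Section Symplectic.
Context {H : HilbertSpace} (tau : H -> H).
Hypothesis Htau : isometric_antilinear_involution tau.

Lemma tau_add (x y : H) : tau (vadd x y) = vadd (tau x) (tau y).
Proof. apply Htau. Qed.

Lemma tau_invol (x : H) : tau (tau x) = x.
Proof. apply Htau. Qed.

Lemma vnorm_tau (x : H) : vnorm (tau x) = vnorm x.
Proof. apply Htau. Qed.

Lemma tau_zero : tau vzero = vzero.
Proof.
  apply (vadd_cancel_l (tau vzero)). rewrite <- tau_add, !vadd_0r. reflexivity.
Qed.

Lemma tau_sub (x y : H) : tau (vsub x y) = vsub (tau x) (tau y).
Proof.
  destruct Htau as [_ [Tsmul _]]. unfold vsub.
  rewrite tau_add, <- !smul_m1, Tsmul. do 2 f_equal. apply Ceq; csimpl; ring.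
Qed.

(* The omega-orthogonal of any set F is closed: if each v_n is omega-orthogonal
   to F and v_n -> v, then for f in F, omega(f, v) = omega(f, v - v_n) is
   bounded by (||f_1|| + ||f_2||) ||v - v_n|| by Cauchy-Schwarz, since tau is
   an isometry. *)
Lemma omega_orth_closed (F : HH H -> Prop) (v : nat -> HH H) (y x : H) :
  (forall n, omega_orth tau F (v n)) ->
  converges (fun n => fst (v n)) y -> converges (fun n => snd (v n)) x ->
  omega_orth tau F (y, x).
Proof.
  intros Hv Hy Hx f Ff.
  pose proof (vnorm_ge0 (fst f)) as hf1. pose proof (vnorm_ge0 (snd f)) as hf2.
  assert (Hsmall : forall eps, 0 < eps ->
    Rabs (re (omega tau f (y, x))) <= (vnorm (fst f) + vnorm (snd f)) * eps /\
    Rabs (im (omega tau f (y, x))) <= (vnorm (fst f) + vnorm (snd f)) * eps).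
  { intros eps he.
    destruct (Hy eps he) as [N1 HN1], (Hx eps he) as [N2 HN2].
    set (n := (N1 + N2)%nat).
    specialize (HN1 n ltac:(unfold n; lia)). specialize (HN2 n ltac:(unfold n; lia)).
    simpl in HN1, HN2.
    assert (Hdiff : omega tau f (y, x) =
      Csub (inner (snd f) (tau (vsub (fst (v n)) y)))
           (inner (fst f) (tau (vsub (snd (v n)) x)))).
    { pose proof (Hv n f Ff) as Zn. unfold omega, bil in Zn |- *. simpl.
      rewrite !tau_sub.
      apply Ceq; [apply (f_equal re) in Zn | apply (f_equal im) in Zn];
        expand_in Zn; expand; lra. }
    destruct (inner_parts_bound (snd f) (tau (vsub (fst (v n)) y))) as [B1re B1im].
    destruct (inner_parts_bound (fst f) (tau (vsub (snd (v n)) x))) as [B2re B2im].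
    rewrite vnorm_tau in B1re, B1im, B2re, B2im.
    rewrite Hdiff. unfold Csub, Cadd, Copp; simpl.
    pose proof (Rabs_triang (re (inner (snd f) (tau (vsub (fst (v n)) y))))
                            (- re (inner (fst f) (tau (vsub (snd (v n)) x))))).
    pose proof (Rabs_triang (im (inner (snd f) (tau (vsub (fst (v n)) y))))
                            (- im (inner (fst f) (tau (vsub (snd (v n)) x))))).
    assert (vnorm (snd f) * vnorm (vsub (fst (v n)) y) <= vnorm (snd f) * eps)
      by (apply Rmult_le_compat_l; lra).
    assert (vnorm (fst f) * vnorm (vsub (snd (v n)) x) <= vnorm (fst f) * eps)
      by (apply Rmult_le_compat_l; lra).
    rewrite !Rabs_Ropp in *. split; lra. }
  apply Ceq; csimpl;
    apply (real_eq0_of_small _ (vnorm (fst f) + vnorm (snd f))); try lra;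
    intros eps he; apply (Hsmall eps he).
Qed.

End Symplectic.

Section Lagrangian.
Context {H : HilbertSpace} (tau : H -> H) (L : HH H -> Prop).
Hypothesis Htau : isometric_antilinear_involution tau.
Hypothesis HL : lagrangian tau L.
Hypothesis Hpos : forall v, L v -> im (hform v v) = 0 /\ 0 <= re (hform v v).

(* A Lagrangian equals its omega-orthogonal, hence is closed. *)
Lemma lagrangian_closed (v : nat -> HH H) (y x : H) :
  (forall n, L (v n)) ->
  converges (fun n => fst (v n)) y -> converges (fun n => snd (v n)) x -> L (y, x).
Proof.
  destruct HL as [_ Lorth]. intros Lv Hy Hx.
  apply Lorth, (omega_orth_closed tau Htau L v); auto.
  intro n. apply Lorth, Lv.
Qed.

Lemma lagrangian_sub (v w : HH H) :
  L v -> L w -> L (vsub (fst v) (fst w), vsub (snd v) (snd w)).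
Proof.
  destruct HL as [[_ [Ladd Lsmul]] _]. intros Lv Lw.
  pose proof (Ladd _ _ Lv (Lsmul (mkC (-1) 0) _ Lw)) as Ldiff.
  unfold HHadd, HHsmul in Ldiff. simpl in Ldiff. rewrite !smul_m1 in Ldiff. exact Ldiff.
Qed.

Lemma lagrangian_fst_le_snd (v : HH H) : L v -> sqnorm (fst v) <= sqnorm (snd v).
Proof.
  intro Lv. destruct (Hpos v Lv) as [_ P]. unfold hform in P. csimpl.
  unfold sqnorm. lra.
Qed.

Lemma lagrangian_H1_trivial (v : HH H) : L v -> snd v = vzero -> v = HHzero.
Proof.
  destruct v as [a c]. simpl. intros Lv Hc. subst c.
  pose proof (lagrangian_fst_le_snd _ Lv) as P. simpl in P.
  unfold sqnorm in P. rewrite inner_0l in P. csimpl.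
  assert (Ha : a = vzero) by (apply sqnorm_eq0; pose proof (sqnorm_ge0 a);
                              unfold sqnorm in *; lra).
  rewrite Ha. reflexivity.
Qed.

Definition snd_image (x : H) : Prop := exists v, L v /\ snd v = x.

Lemma snd_image_subspace : is_hsubspace snd_image.
Proof.
  destruct HL as [[L0 [Ladd Lsmul]] _]. split; [| split].
  - exists HHzero. auto.
  - intros x y [v [Lv <-]] [w [Lw <-]]. exists (HHadd v w). auto.
  - intros c x [v [Lv <-]]. exists (HHsmul c v). auto.
Qed.

(* A Cauchy sequence in snd(L) lifts to a sequence in L whose first
   components are Cauchy too; its limit lies in L since L is closed. *)
Lemma snd_image_complete : complete_subset snd_image.
Proof.
  intros u Su Hcauchy.
  destruct (seq_choice (fun n v => L v /\ snd v = u n) Su) as [v Hv].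
  assert (Hdom : forall m n, vnorm (vsub (fst (v m)) (fst (v n))) <=
                             vnorm (vsub (u m) (u n))).
  { intros m n. destruct (Hv m) as [Lm Em], (Hv n) as [Ln En].
    pose proof (lagrangian_fst_le_snd _ (lagrangian_sub _ _ Lm Ln)) as P.
    simpl in P. rewrite Em, En in P. apply sqrt_le_1_alt, P. }
  destruct (cauchy_converges _ (cauchy_dominated u _ Hdom Hcauchy)) as [y Hy].
  destruct (cauchy_converges _ Hcauchy) as [x Hx].
  exists x. split; auto.
  exists (y, x). split; auto.
  apply (lagrangian_closed v); auto.
  - intro n. apply Hv.
  - intros eps he. destruct (Hx eps he) as [N HN]. exists N. intros n hn.
    destruct (Hv n) as [_ ->]. auto.
Qed.

(* A vector orthogonal to snd(L) is zero: (tau x, 0) is omega-orthogonal to L,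
   hence in L, hence zero by the first half of transversality. *)
Lemma snd_image_orth_trivial (x : H) :
  (forall s, snd_image s -> inner s x = C0) -> x = vzero.
Proof.
  destruct HL as [_ Lorth]. intro Horth.
  assert (Lx : L (tau x, vzero)).
  { apply Lorth. intros w Lw. unfold omega, bil. simpl.
    rewrite (tau_zero tau Htau), (tau_invol tau Htau), inner_0r,
      (Horth (snd w) (ex_intro _ w (conj Lw eq_refl))).
    apply Ceq; csimpl; ring. }
  pose proof (f_equal fst (lagrangian_H1_trivial _ Lx eq_refl)) as Z. simpl in Z.
  rewrite <- (tau_invol tau Htau x), Z. apply (tau_zero tau Htau).
Qed.

Lemma snd_image_full (b : H) : snd_image b.
Proof.
  destruct (orthogonal_projection snd_image snd_image_subspace b snd_image_complete)
    as [m [Sm Horth]].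
  rewrite (vsub_eq0 b m (snd_image_orth_trivial _ Horth)). exact Sm.
Qed.

End Lagrangian.

Theorem proposition2p1 (H : HilbertSpace) (Hsep : separable H) (tau : H -> H)
  (Htau : isometric_antilinear_involution tau) (L : HH H -> Prop)
  (HL : lagrangian tau L)
  (Hpos : forall v, L v -> im (hform v v) = 0 /\ 0 <= re (hform v v)) :
  transverse L H1.
Proof.
  split.
  - intros v Lv H1v. exact (lagrangian_H1_trivial L Hpos v Lv H1v).
  - intros [a b].
    destruct (snd_image_full tau L Htau HL Hpos b) as [[l1 l2] [Ll Hl2]].
    simpl in Hl2. subst l2.
    exists (l1, b), (vsub a l1, vzero). repeat split; auto.
    unfold HHadd. simpl. rewrite vadd_comm, vsub_add, vadd_0r. reflexivity.
Qed.
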